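(* Let $b\ge 1$ and let $r=(r_1,r_2,\ldots,r_\ell)$ be an ordered partition of $b$. The number of ways that $r$ can have an ordered partition of $b$ embedded inside it (counting nontrivial embeddings of every ordered partition $q$ of $b$ into $r$, together with the one trivial embedding of $r$ into itself) is \[ \prod_{i=1}^{\ell}(r_i+1). \] Equivalently, this is the number of cards for $b$ balls whose right partition is $r$.
   Context: For an integer $b\ge 0$, an ordered partition of $b$ is a finite sequence $(q_1,\ldots,q_k)$ of positive integers summing to $b$ (for $b=0$ the only one is the empty sequence). An ordered partition $(q_1,\ldots,q_k)$ with $k\ge1$ is nontrivially embedded into an ordered partition $(r_1,\ldots,r_\ell)$ by a choice of indices $1\le i_2<i_3<\cdots<i_k\le \ell$ with $q_j\le r_{i_j}$ for $2\le j\le k$; different index tuples count as different embeddings. The trivial embedding of $q$ into $r$ exists only when $q=r$. A card for $b$ balls is either (i) a trivial card, given by an ordered partition $q$ of $b$, whose left and right partitions are both $q$; or (ii) a throw card, given by ordered partitions $q=(q_1,\ldots,q_k)$ ($k\ge1$) and $r=(r_1,\ldots,r_\ell)$ of $b$ together with a nontrivial embedding $(i_2,\ldots,i_k)$ of $q$ into $r$; its left partition is $q$ and its right partition is $r$. Different index tuples give different cards, and a throw card is distinct from the trivial card even when $q=r$. *)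

From mathcomp Require Import all_boot.
Set Implicit Arguments. Unset Strict Implicit. Unset Printing Implicit Defensive.

Definition is_opart (b : nat) (q : seq nat) : bool :=
  all (fun x => 0 < x) q && (sumn q == b).

(* The index tuple (i_2,...,i_k) is given 0-based as s (size k-1, entries in 'I_(size r)):
   s_j corresponds to i_{j+2} - 1.  Conditions: strictly increasing, and
   q_{j+2} <= r_{i_{j+2}}, i.e. nth 0 q j.+1 <= nth 0 r (s_j). *)
Definition is_nt_embedding (q r : seq nat) (s : seq nat) : bool :=
  [&& 0 < size q, size s == (size q).-1, all (fun i => i < size r) s,
      sorted ltn s &
      all (fun j => nth 0 q j.+1 <= nth 0 r (nth 0 s j)) (iota 0 (size s))].

(* Every ordered partition of b (b >= 1) has length k <= b and parts <= b, hence
   is represented by some k.-tuple of 'I_b.+1 with k < b.+1. *)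

Definition num_throw_cards (b : nat) (r : seq nat) : nat :=
  \sum_(k < b.+1)
    #|[set qs : k.-tuple 'I_b.+1 * (k.-1).-tuple 'I_(size r) |
        is_opart b (map val qs.1) &&
        is_nt_embedding (map val qs.1) r (map val qs.2)]|.

(* Number of trivial cards for b balls whose right partition is r
   (trivial card q has right partition q). *)
Definition num_trivial_cards (b : nat) (r : seq nat) : nat :=
  \sum_(k < b.+1)
    #|[set q : k.-tuple 'I_b.+1 | is_opart b (map val q) && (map val q == r)]|.

Definition num_cards_right (b : nat) (r : seq nat) : nat :=
  num_throw_cards b r + num_trivial_cards b r.

From mathcomp Require Import all_boot.
Set Implicit Arguments. Unset Strict Implicit. Unset Printing Implicit Defensive.

(* Record a throw card (q, i_2 < ... < i_k) with right partition r as the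
   vector v of length l with v_(i_j) = q_j and zeros elsewhere.  The embedding
   condition says exactly that v <= r entrywise, and q_1 = b - |v| is positive
   exactly when v <> r; conversely q and the indices are read off the nonzero
   entries of v.  So throw cards correspond to the vectors 0 <= v <= r other
   than r, the trivial card to r itself, and there are prod (r_i + 1) such
   vectors. *)

Lemma all2_leqP (v r : seq nat) :
  reflect (size v = size r /\ forall i, i < size r -> nth 0 v i <= nth 0 r i)
          (all2 leq v r).
Proof.
elim: v r => [|x v IHv] [|y r] /=; [by constructor | by constructor; case..|].
apply: (iffP andP) => [[le_xy /IHv [-> le_vr]] | [[eq_sz] le_vr]].
  by split=> // -[|i] //= /le_vr.
by split; [exact: (le_vr 0) | apply/IHv; split=> // i /(le_vr i.+1)].
Qed.

Fixpoint dominated (r : seq nat) : seq (seq nat) :=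
  if r is x :: r' then [seq a :: v | a <- iota 0 x.+1, v <- dominated r']
  else [:: [::]].

Lemma mem_dominated r v : (v \in dominated r) = all2 leq v r.
Proof.
elim: r v => [|x r IHr] [|a v] //.
  by apply/negbTE/allpairsP => -[[? ?] []].
apply/allpairsP/andP => [[[c w] [+ + [-> ->]]] | [a_x v_r]].
  by rewrite mem_iota ltnS IHr.
by exists (a, v); rewrite mem_iota ltnS IHr.
Qed.

Lemma dominated_uniq r : uniq (dominated r).
Proof.
elim: r => [|x r IHr] //.
by apply: allpairs_uniq => [||[? ?] [? ?] _ _ /= [-> ->]] //; exact: iota_uniq.
Qed.

Lemma size_dominated r : size (dominated r) = \prod_(x <- r) (x + 1).
Proof.
elim: r => [|x r IHr]; first by rewrite big_nil.
by rewrite big_cons size_allpairs size_iota IHr addn1.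
Qed.

Lemma ltn_sumn_all2 v r : all2 leq v r -> v != r -> sumn v < sumn r.
Proof.
elim: v r => [|x v IHv] [|y r] //= /andP [le_xy le_vr].
have [<-|ne_vr] := eqVneq v r.
  by rewrite ltn_add2r ltn_neqAle le_xy andbT; apply: contraNneq => ->.
by move=> _; rewrite -addnS; apply: leq_add le_xy (IHv _ le_vr ne_vr).
Qed.

Lemma size_le_sumn s : all (fun x => 0 < x) s -> size s <= sumn s.
Proof.
by elim: s => [|x s IHs] //= /andP [x_gt0 /IHs le_s]; rewrite -add1n leq_add.
Qed.

Lemma leq_sumn s x : x \in s -> x <= sumn s.
Proof.
elim: s => [|y s IHs] //; rewrite in_cons => /predU1P [->|/IHs le_xs] /=.
  exact: leq_addr.
exact: leq_trans le_xs (leq_addl _ _).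
Qed.

Definition nzpos (v : seq nat) := [seq i <- iota 0 (size v) | 0 < nth 0 v i].

Definition nzvals (v : seq nat) := [seq nth 0 v i | i <- nzpos v].

Definition scatter n (s t : seq nat) :=
  [seq if i \in s then nth 0 t (index i s) else 0 | i <- iota 0 n].

Lemma nzvals_filter v : nzvals v = [seq x <- v | 0 < x].
Proof. by rewrite /nzvals /nzpos -[in RHS](mkseq_nth 0 v) /mkseq filter_map. Qed.

Lemma sumn_nzvals v : sumn (nzvals v) = sumn v.
Proof. by rewrite nzvals_filter; elim: v => [|[|x] v IHv] //=; rewrite IHv. Qed.

Lemma nzvals_gt0 v : all (fun x => 0 < x) (nzvals v).
Proof. by rewrite nzvals_filter filter_all. Qed.

Lemma size_nzvals v : size (nzvals v) = size (nzpos v).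
Proof. exact: size_map. Qed.

Lemma mem_nzpos v i : (i \in nzpos v) = (i < size v) && (0 < nth 0 v i).
Proof. by rewrite mem_filter mem_iota andbC. Qed.

Lemma nzpos_sorted v : sorted ltn (nzpos v).
Proof. exact/(sorted_filter ltn_trans)/iota_ltn_sorted. Qed.

Lemma size_scatter n s t : size (scatter n s t) = n.
Proof. by rewrite size_map size_iota. Qed.

Lemma nth_scatter n s t i : i < n ->
  nth 0 (scatter n s t) i = if i \in s then nth 0 t (index i s) else 0.
Proof. by move=> lt_in; rewrite (nth_map 0) ?size_iota ?nth_iota. Qed.

Lemma scatter_nzpos v : scatter (size v) (nzpos v) (nzvals v) = v.
Proof.
apply: (@eq_from_nth _ 0) => [|i]; rewrite size_scatter // => lt_iv.
rewrite nth_scatter //; case: ifPn => [i_nz | ].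
  by rewrite (nth_map 0) ?index_mem ?nth_index.
by rewrite mem_nzpos lt_iv; case: (nth 0 v i).
Qed.

Section ScatterSorted.
Variables (n : nat) (s t : seq nat).
Hypotheses (t_gt0 : all (fun x => 0 < x) t) (eq_size : size s = size t).
Hypotheses (s_lt_n : all (fun i => i < n) s) (s_sorted : sorted ltn s).

Lemma nzpos_scatter : nzpos (scatter n s t) = s.
Proof.
apply: (irr_sorted_eq ltn_trans ltnn (nzpos_sorted _) s_sorted) => i.
rewrite mem_nzpos size_scatter; have [lt_in | le_ni] := ltnP i n.
  rewrite nth_scatter //=; case: ifP => // i_s.
  by apply: (all_nthP 0 t_gt0); rewrite -eq_size index_mem.
by apply/esym/negP => /(allP s_lt_n); rewrite ltnNge le_ni.
Qed.

Lemma nzvals_scatter : nzvals (scatter n s t) = t.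
Proof.
have s_uniq : uniq s := sorted_uniq ltn_trans ltnn s_sorted.
apply: (@eq_from_nth _ 0) => [|j]; rewrite size_nzvals nzpos_scatter // => lt_js.
rewrite (nth_map 0) ?nzpos_scatter // nth_scatter; last exact/(allP s_lt_n)/mem_nth.
by rewrite mem_nth // index_uniq.
Qed.

End ScatterSorted.

Lemma card_set_bij_seq (T : finType) (U : eqType) (P : pred T) (F : T -> U)
    (W : seq U) :
  {in P &, injective F} -> uniq W -> (forall x, P x -> F x \in W) ->
  (forall w, w \in W -> exists2 x, P x & F x = w) -> #|[set x | P x]| = size W.
Proof.
move=> F_inj W_uniq F_W W_F.
rewrite cardsE cardE -(size_map F); apply/perm_size/uniq_perm => //.
  by rewrite map_inj_in_uniq ?enum_uniq // => x y; rewrite !mem_enum; apply: F_inj.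
move=> w; apply/mapP/idP => [[x + ->] | /W_F [x Px <-]].
  by rewrite mem_enum; apply: F_W.
by exists x; rewrite ?mem_enum.
Qed.

Lemma sum_size_filter_eq (U : eqType) (g : U -> nat) n (W : seq U) :
  all (fun w => g w < n) W -> \sum_(k < n) size [seq w <- W | g w == k] = size W.
Proof.
move=> /allP g_lt_n.
under eq_bigr do rewrite size_filter -sumn_count sumnE big_map.
rewrite exchange_big -sum1_size big_seq [RHS]big_seq; apply: eq_bigr => w w_W.
by rewrite -big_mkcond (big_pred1 (Ordinal (g_lt_n w w_W))) => // i; rewrite eq_sym.
Qed.

Lemma exists_tuple_ord n k (s : seq nat) :
  size s = k -> all (fun i => i < n) s -> exists t : k.-tuple 'I_n, map val t = s.
Proof.
move=> <- /all_filterP filter_s.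
have val_t : map val (pmap insub s : seq 'I_n) = s.
  by rewrite (pmap_filter (insubK _)) (eq_filter (isSome_insub _)).
have size_t : size (pmap insub s : seq 'I_n) == size s by rewrite -{2}val_t size_map.
by exists (Tuple size_t).
Qed.

Lemma opart_bound b q : is_opart b q -> all (fun x => x < b.+1) q.
Proof. by case/andP=> _ /eqP <-; apply/allP => x /leq_sumn. Qed.

Definition throw_of_vector b (v : seq nat) : seq nat * seq nat :=
  ((b - sumn v) :: nzvals v, nzpos v).

Definition vector_of_throw n (qs : seq nat * seq nat) : seq nat :=
  scatter n qs.2 (behead qs.1).

Section Cards.
Variables (b : nat) (r : seq nat).
Hypothesis r_opart : is_opart b r.

Lemma vector_of_throw_spec q s : is_opart b q -> is_nt_embedding q r s ->
  let v := vector_of_throw (size r) (q, s) in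
  [/\ v \in dominated r, v != r & throw_of_vector b v = (q, s)].
Proof.
case/andP: r_opart => _ /eqP sum_r.
case: q => [_ /and5P [] // | q1 t /andP [/= /andP [q1_gt0 t_gt0] /eqP sum_q]].
case/and5P=> _ /eqP /= size_s s_lt s_sorted le_tr.
set v := vector_of_throw _ _.
have nzpos_v : nzpos v = s := nzpos_scatter t_gt0 size_s s_lt s_sorted.
have nzvals_v : nzvals v = t := nzvals_scatter t_gt0 size_s s_lt s_sorted.
have sum_v : sumn v = sumn t by rewrite -sumn_nzvals nzvals_v.
split.
- rewrite mem_dominated; apply/all2_leqP; split=> [|i lt_ir]; first exact: size_scatter.
  rewrite nth_scatter //; case: ifP => // i_s.
  have lt_idx : index i s < size s by rewrite index_mem.
  by have /= := allP le_tr (index i s); rewrite mem_iota lt_idx nth_index // => ->.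
- apply: contraTneq q1_gt0 => v_r.
  by have /addIn -> : q1 + sumn t = 0 + sumn t by rewrite sum_q -sum_r -v_r sum_v.
- by rewrite /throw_of_vector nzpos_v nzvals_v sum_v -sum_q addnK.
Qed.

Lemma throw_of_vector_spec v : v \in dominated r -> v != r ->
  let qs := throw_of_vector b v in
  [/\ is_opart b qs.1, is_nt_embedding qs.1 r qs.2 & vector_of_throw (size r) qs = v].
Proof.
rewrite mem_dominated => le_vr ne_vr qs.
case/andP: r_opart => _ /eqP sum_r.
have lt_vb : sumn v < b by rewrite -sum_r ltn_sumn_all2.
have [size_v le_nth] := all2_leqP _ _ le_vr.
split.
- by rewrite /is_opart /= nzvals_gt0 sumn_nzvals subn_gt0 lt_vb subnK ?(ltnW lt_vb) /=.
- apply/and5P; split=> //=; rewrite ?size_nzvals ?nzpos_sorted //.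
    by apply/allP => i; rewrite mem_nzpos size_v => /andP [].
  apply/allP => j; rewrite mem_iota => /= lt_j.
  have /[!mem_nzpos] /andP [lt_jr _] := mem_nth 0 lt_j.
  by rewrite (nth_map 0) // le_nth // -size_v.
- by rewrite /vector_of_throw -size_v scatter_nzpos.
Qed.

Lemma card_throw_cards k :
  #|[set qs : k.-tuple 'I_b.+1 * (k.-1).-tuple 'I_(size r) |
      is_opart b (map val qs.1) && is_nt_embedding (map val qs.1) r (map val qs.2)]|
  = size [seq v <- [seq v <- dominated r | v != r] | size (throw_of_vector b v).1 == k].
Proof.
pose F (qs : k.-tuple 'I_b.+1 * (k.-1).-tuple 'I_(size r)) :=
  vector_of_throw (size r) (map val qs.1, map val qs.2).
apply: (card_set_bij_seq (F := F)).
- move=> [x1 x2] [y1 y2] /andP [x_q x_s] /andP [y_q y_s] eq_F.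
  have [_ _ /= x_F] := vector_of_throw_spec x_q x_s.
  have [_ _ /= y_F] := vector_of_throw_spec y_q y_s.
  move: x_F; rewrite [vector_of_throw _ _]eq_F y_F => -[/(inj_map val_inj) x1_y1].
  by move=> /(inj_map val_inj) x2_y2; congr pair; apply: val_inj.
- by do 2!apply: filter_uniq; apply: dominated_uniq.
- move=> [x1 x2] /andP [x_q x_s].
  have [F_r F_ne F_x] := vector_of_throw_spec x_q x_s.
  by rewrite !mem_filter /F F_x size_map size_tuple eqxx F_ne F_r.
- move=> w; rewrite !mem_filter => /and3P [/eqP size_k w_ne w_r].
  have [q_opart q_emb F_w] := throw_of_vector_spec w_r w_ne.
  have [t1 val_t1] := exists_tuple_ord size_k (opart_bound q_opart).
  have size_s : size (throw_of_vector b w).2 = k.-1 by rewrite -size_k /= size_nzvals.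
  have /and5P [_ _ s_lt _ _] := q_emb.
  have [t2 val_t2] := exists_tuple_ord size_s s_lt.
  by exists (t1, t2); rewrite /F /= ?val_t1 ?val_t2 ?q_opart.
Qed.

Lemma card_trivial_cards k :
  #|[set q : k.-tuple 'I_b.+1 | is_opart b (map val q) && (map val q == r)]|
  = size [seq q <- [:: r] | size q == k].
Proof.
apply: (card_set_bij_seq (F := fun q : k.-tuple 'I_b.+1 => map val q)).
- by move=> x y _ _ /(inj_map val_inj) eq_xy; apply: val_inj.
- by rewrite /=; case: ifP.
- by move=> x /andP [_ /eqP <-]; rewrite /= size_map size_tuple eqxx mem_seq1.
- move=> w; rewrite mem_filter mem_seq1 => /andP [/eqP size_k /eqP w_r]; subst w.
  have [t val_t] := exists_tuple_ord size_k (opart_bound r_opart).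
  by exists t; rewrite // val_t r_opart eqxx.
Qed.

End Cards.

Theorem lemma2 (b : nat) (r : seq nat) :
  1 <= b -> is_opart b r ->
  num_cards_right b r = \prod_(x <- r) (x + 1).
Proof.
move=> _ r_opart; have /andP [r_gt0 /eqP sum_r] := r_opart.
rewrite /num_cards_right /num_throw_cards /num_trivial_cards.
rewrite (eq_bigr _ (fun (k : 'I_b.+1) _ => card_throw_cards r_opart k)).
rewrite (eq_bigr _ (fun (k : 'I_b.+1) _ => card_trivial_cards r_opart k)).
rewrite !sum_size_filter_eq.
- have r_dom : r \in dominated r by rewrite mem_dominated; apply/all2_leqP.
  by rewrite -size_dominated (perm_size (perm_to_rem r_dom)) rem_filter ?dominated_uniq ?addn1.
- by rewrite /= andbT ltnS -sum_r size_le_sumn.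
- apply/allP => v; rewrite mem_filter mem_dominated => /andP [ne_vr le_vr].
  rewrite /= ltnS; apply: leq_ltn_trans (size_le_sumn (nzvals_gt0 v)) _.
  by rewrite sumn_nzvals -sum_r ltn_sumn_all2.
Qed.
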